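(* If two bounding triples in $BT_n$ are conjugate under the action of $GL_\infty(\mathbb{F}_q)$, then they are conjugate under the action of the subgroup $GL_n(\mathbb{F}_q)$.
   Context: $\mathbb{F}_q^\infty$ has basis $e_1,e_2,\dots$; $\mathbb{F}_q^n=\mathrm{span}\{e_1,\dots,e_n\}$. $GL_\infty(\mathbb{F}_q)=\varinjlim GL_n(\mathbb{F}_q)$ under $g\mapsto\operatorname{diag}(g,\mathrm{Id})$, i.e. invertible $\mathbb{Z}_{>0}\times\mathbb{Z}_{>0}$ matrices differing from the identity in finitely many entries; $g^T$ is the transpose. A subspace is smooth if it contains $e_i$ for all sufficiently large $i$. A bounding triple is $(W,g,V)$ with $W,V$ smooth, $g\in GL_\infty(\mathbb{F}_q)$, $g$ acting as identity on $V$ and $g^T$ acting as identity on $W$. $BT_n$ is the set of bounding triples with $e_{n+1},e_{n+2},\dots\in V\cap W$. $GL_\infty(\mathbb{F}_q)$ acts by $x\cdot(W,g,V)=(x^{-T}W,xgx^{-1},xV)$, $x^{-T}=(x^{-1})^T$. *)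

From HB Require Import structures.
From mathcomp Require Import all_boot all_order all_algebra.
From mathcomp Require Import boolp classical_sets fsbigop.
Set Implicit Arguments. Unset Strict Implicit. Unset Printing Implicit Defensive.
Import Order.TTheory GRing.Theory Num.Theory.
Local Open Scope classical_set_scope.
Local Open Scope ring_scope.

(* Indexing convention: the paper's basis vector e_{k+1} is index k : nat
   here, so F^n = span of indices 0..n-1. *)
Section Defs.
Variable F : finFieldType.

(* vectors of F^oo (finitely supported sequences) and Z>0 x Z>0 matrices *)
Definition vec := nat -> F.
Definition mat := nat -> nat -> F.

Definition finsupp (v : vec) : Prop := exists N, forall i, (N <= i)%N -> v i = 0.

Definition ebasis (k : nat) : vec := fun j => (k == j)%:R.
Definition idm : mat := fun i j => (i == j)%:R.
Definition trm (g : mat) : mat := fun i j => g j i.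

Definition finitary (g : mat) : Prop :=
  exists N, forall i j, (N <= i)%N || (N <= j)%N -> g i j = idm i j.

Definition mulm (g h : mat) : mat :=
  fun i j => \sum_(k \in [set: nat]) g i k * h k j.
Definition appm (g : mat) (v : vec) : vec :=
  fun i => \sum_(k \in [set: nat]) g i k * v k.

Definition GLinv (x y : mat) : Prop :=
  finitary x /\ finitary y /\ mulm x y = idm /\ mulm y x = idm.

Definition GLinf (g : mat) : Prop := exists h, GLinv g h.

Definition subspace (S : set vec) : Prop :=
  S `<=` finsupp /\ S (fun _ => 0) /\
  (forall (a : F) u v, S u -> S v -> S (fun i => a * u i + v i)).

Definition smooth (S : set vec) : Prop :=
  subspace S /\ exists N, forall i, (N <= i)%N -> S (ebasis i).

Definition fixes (g : mat) (S : set vec) : Prop :=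
  forall v, S v -> appm g v = v.

Definition triple := (set vec * mat * set vec)%type.

Definition bounding (T : triple) : Prop :=
  let: (W, g, V) := T in
  [/\ smooth W, smooth V, GLinf g, fixes g V & fixes (trm g) W].

Definition BT (n : nat) (T : triple) : Prop :=
  bounding T /\
  let: (W, g, V) := T in forall i, (n <= i)%N -> V (ebasis i) /\ W (ebasis i).

(* x . (W, g, V) = (x^{-T} W, x g x^{-1}, x V), where y = x^{-1} *)
Definition act (x y : mat) (T : triple) : triple :=
  let: (W, g, V) := T in
  (appm (trm y) @` W, mulm (mulm x g) y, appm x @` V).

(* the embedding GL_n -> GL_oo, A |-> diag(A, Id) *)
Definition embGL (n : nat) (A : 'M[F]_n) : mat :=
  fun i j => match insub i, insub j with
             | Some i', Some j' => A i' j'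
             | _, _ => idm i j
             end.
End Defs.

(* A triple (W, g, V) in BT_n has g equal to the identity outside the first n
   coordinates, as g fixes e_i and g^T fixes e_i for i >= n.  A conjugating x
   lies in some GL_N, and N can be lowered one step at a time: if x in GL_(m+1)
   conjugates T1 to T2, both in BT_m, replace x by its upper-left m x m block
   corrected by the rank-one matrix s x(:,m) x(m,:), and x^-1 likewise with a
   parameter t.  The condition (1 - s x_mm)(1 - t x^-1_mm) = s t, which is always
   solvable, makes the two corrected matrices mutually inverse.  On any vector the
   corrected matrix differs from x by a combination of x e_m and e_m, which lie in
   V2 since e_m lies in V1 and V2; so it still maps V1 onto V2, dually W1 onto W2,
   and since g1 and g2 fix e_m it still intertwines them. *)

From HB Require Import structures.
From mathcomp Require Import all_boot all_order all_algebra.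
From mathcomp Require Import boolp classical_sets fsbigop ring.
Set Implicit Arguments. Unset Strict Implicit. Unset Printing Implicit Defensive.
Import GRing.Theory.
Local Open Scope classical_set_scope.
Local Open Scope ring_scope.

Section BoundedMatrices.
Variable F : finFieldType.
Local Notation idm := (idm F).
Local Notation e := (ebasis F).

Definition bounded N (g : mat F) :=
  forall i j, (N <= i)%N || (N <= j)%N -> g i j = idm i j.

Definition GLn_inv N (x y : mat F) :=
  [/\ bounded N x, bounded N y, mulm x y = idm & mulm y x = idm].

Lemma idmE i j : idm i j = (i == j)%:R. Proof. by []. Qed.

Lemma idm_diag i : idm i i = 1. Proof. by rewrite idmE eqxx. Qed.

Lemma idm_offdiag i j : i != j -> idm i j = 0.
Proof. by move=> h; rewrite idmE (negbTE h). Qed.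

Lemma fsbig_setT_ord (f : nat -> F) N : (forall k, (N <= k)%N -> f k = 0) ->
  \sum_(k \in [set: nat]) f k = \sum_(k < N) f k.
Proof.
move=> f0; rewrite fsbig_ord; apply/esym/fsbig_widen => // k [_ /=].
by rewrite /preimage /= => kN; apply: f0; rewrite leqNgt; apply/negP.
Qed.

Lemma fsbig_setT_single (f : nat -> F) i : (forall k, k <> i -> f k = 0) ->
  \sum_(k \in [set: nat]) f k = f i.
Proof.
move=> f0; rewrite (@fsbig_setT_ord _ i.+1) => [|k ik]; last first.
  by apply: f0 => ki; rewrite ki ltnn in ik.
rewrite big_ord_recr /= big1 ?add0r // => k _; apply: f0 => ki.
by have := ltn_ord k; rewrite ki ltnn.
Qed.

Lemma appm_ebasis (g : mat F) j i : appm g (e j) i = g i j.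
Proof.
rewrite /appm (@fsbig_setT_single _ j) /ebasis ?eqxx ?mulr1 // => k kj.
by rewrite (_ : (j == k) = false) ?mulr0 //; apply/eqP => jk; apply: kj.
Qed.

Section Bound.
Variable N : nat.

Lemma appm_bounded g v : bounded N g ->
  appm g v = fun i => if (i < N)%N then \sum_(k < N) g i k * v k else v i.
Proof.
move=> gN; apply: funext => i; rewrite /appm; case: ltnP => iN.
  rewrite (@fsbig_setT_ord _ N) // => k kN; rewrite gN ?kN ?orbT // idm_offdiag ?mul0r //.
  by rewrite neq_ltn (leq_trans iN kN).
rewrite (@fsbig_setT_single _ i) ?gN ?iN // ?idm_diag ?mul1r // => k ki.
by rewrite gN ?iN // idm_offdiag ?mul0r //; apply/eqP => ik; apply: ki.
Qed.

Lemma mulm_bounded g h : bounded N g -> bounded N h ->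
  mulm g h = fun i j =>
    if (i < N)%N && (j < N)%N then \sum_(k < N) g i k * h k j else idm i j.
Proof.
move=> gN hN; apply: funext => i; apply: funext => j; rewrite /mulm.
case: (ltnP i N) => iN /=; first case: (ltnP j N) => jN /=.
- rewrite (@fsbig_setT_ord _ N) // => k kN; rewrite gN ?kN ?orbT // idm_offdiag ?mul0r //.
  by rewrite neq_ltn (leq_trans iN kN).
- rewrite (@fsbig_setT_single _ j) ?hN ?jN ?orbT // ?idm_diag ?mulr1 ?gN ?jN ?orbT // => k kj.
  by rewrite hN ?jN ?orbT // idm_offdiag ?mulr0 //; apply/eqP.
- rewrite (@fsbig_setT_single _ i) ?gN ?iN // ?idm_diag ?mul1r ?hN ?iN // => k ki.
  by rewrite gN ?iN // idm_offdiag ?mul0r //; apply/eqP => ik; apply: ki.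
Qed.

Lemma bounded_mulm g h : bounded N g -> bounded N h -> bounded N (mulm g h).
Proof.
move=> gN hN i j ijN; rewrite (mulm_bounded gN hN).
by case/orP: ijN => kN; rewrite leqNgt in kN; rewrite (negbTE kN) ?andbF.
Qed.

Lemma bounded_trm g : bounded N g -> bounded N (trm g).
Proof. by move=> gN i j ijN; rewrite /trm gN 1?orbC // !idmE eq_sym. Qed.

Lemma appm_mulm g h v : bounded N g -> bounded N h ->
  appm g (appm h v) = appm (mulm g h) v.
Proof.
move=> gN hN; rewrite (appm_bounded _ gN) (appm_bounded _ hN).
rewrite (appm_bounded _ (bounded_mulm gN hN)) (mulm_bounded gN hN).
apply: funext => i /=; case: ifP => iN; last by rewrite iN.
under eq_bigr => k _ do rewrite ltn_ord mulr_sumr.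
rewrite exchange_big /=; apply: eq_bigr => l _; rewrite ltn_ord mulr_suml.
by apply: eq_bigr => k _; rewrite mulrA.
Qed.

Lemma mulmA g h k : bounded N g -> bounded N h -> bounded N k ->
  mulm g (mulm h k) = mulm (mulm g h) k.
Proof.
move=> gN hN kN.
rewrite (mulm_bounded gN (bounded_mulm hN kN)) (mulm_bounded (bounded_mulm gN hN) kN).
rewrite (mulm_bounded gN hN) (mulm_bounded hN kN).
apply: funext => i; apply: funext => j; case: ifP => // /andP [iN jN].
under eq_bigr => l _ do rewrite ltn_ord jN /= mulr_sumr.
rewrite exchange_big /=; apply: eq_bigr => l _; rewrite iN ltn_ord /= mulr_suml.
by apply: eq_bigr => l' _; rewrite mulrA.
Qed.

End Bound.

Lemma bounded_widen N M g : (N <= M)%N -> bounded N g -> bounded M g.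
Proof.
move=> NM gN i j /orP ijM; apply: gN.
by case: ijM => kM; apply/orP; [left | right]; apply: leq_trans kM.
Qed.

Lemma appm_idm v : appm idm v = v.
Proof. by rewrite (@appm_bounded 0). Qed.

Lemma mulm1 g : mulm g idm = g.
Proof.
apply: funext => i; apply: funext => j.
rewrite /mulm (@fsbig_setT_single _ j) ?idm_diag ?mulr1 // => k kj.
by rewrite idm_offdiag ?mulr0 //; apply/eqP.
Qed.

Lemma trm_mulm (g h : mat F) : trm (mulm g h) = mulm (trm h) (trm g).
Proof.
apply: funext => i; apply: funext => j.
by apply: eq_fsbigr => k _; rewrite mulrC.
Qed.

Lemma trm_idm : trm idm = idm.
Proof. by apply: funext => i; apply: funext => j; rewrite /trm !idmE eq_sym. Qed.

Lemma mulm_bounded_row N g h i j : bounded N g -> (N <= i)%N -> mulm g h i j = h i j.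
Proof.
move=> gN iN; rewrite /mulm (@fsbig_setT_single _ i) ?gN ?iN ?idm_diag ?mul1r // => k ki.
by rewrite gN ?iN // idm_offdiag ?mul0r //; apply/eqP => ik; apply: ki.
Qed.

Lemma mulm_bounded_col N g h i j : bounded N h -> (N <= j)%N -> mulm g h i j = g i j.
Proof.
move=> hN jN; rewrite /mulm (@fsbig_setT_single _ j) ?hN ?jN ?orbT ?idm_diag ?mulr1 // => k kj.
by rewrite hN ?jN ?orbT // idm_offdiag ?mulr0 //; apply/eqP.
Qed.

Lemma sum_ord_mulm m g h i j : bounded m.+1 g -> bounded m.+1 h ->
  (i <= m)%N -> (j <= m)%N ->
  \sum_(k < m) g i k * h k j = mulm g h i j - g i m * h m j.
Proof.
move=> gm hm im jm; rewrite (mulm_bounded gm hm) /= !ltnS im jm /=.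
by rewrite big_ord_recr /= addrK.
Qed.

Lemma GLn_inv_trm N x y : GLn_inv N x y -> GLn_inv N (trm y) (trm x).
Proof.
case=> xN yN xy yx; split; try exact: bounded_trm.
  by rewrite -trm_mulm xy trm_idm.
by rewrite -trm_mulm yx trm_idm.
Qed.

Lemma GLn_inv_homo N x y (A B : set (vec F)) : GLn_inv N x y -> appm x @` A = B ->
  {homo appm y : v / B v >-> A v}.
Proof.
by case=> xN yN _ yx <- _ [u Au <-]; rewrite (appm_mulm _ yN xN) yx appm_idm.
Qed.

Lemma image_eq_of_homo (f g : vec F -> vec F) (A B : set (vec F)) :
  {homo f : v / A v >-> B v} -> {homo g : v / B v >-> A v} -> cancel g f ->
  f @` A = B.
Proof.
move=> fAB gBA gK; apply/seteqP; split=> [_ [v Av <-]|v Bv]; first exact: fAB.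
by exists (g v); [apply: gBA | apply: gK].
Qed.

End BoundedMatrices.

Section CorrectedTruncation.
Variables (F : finFieldType) (m : nat).
Local Notation idm := (idm F).
Local Notation e := (ebasis F).

(* For r = 1 / x m m the m x m block is the Schur complement of x m m in x. *)
Definition ctrunc (x : mat F) (r : F) : mat F := fun i j =>
  if (i < m)%N && (j < m)%N then x i j - r * x i m * x m j else idm i j.

Lemma bounded_ctrunc x r : bounded m (ctrunc x r).
Proof.
move=> i j ijm; rewrite /ctrunc.
by case/orP: ijm => km; rewrite leqNgt in km; rewrite (negbTE km) ?andbF.
Qed.

Lemma trm_ctrunc x r : trm (ctrunc x r) = ctrunc (trm x) r.
Proof.
apply: funext => i; apply: funext => j; rewrite /trm /ctrunc andbC.
by case: ifP => _; [ring | rewrite !idmE eq_sym].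
Qed.

Lemma ctrunc_params (a b : F) : exists s t : F, (1 - s * a) * (1 - t * b) = s * t.
Proof.
have [-> | a0] := eqVneq a 0; first by exists (1 - b), 1; rewrite !mulr0 subr0 !mul1r mulr1.
by exists a^-1, 0; rewrite mulVf // subrr !mul0r mulr0.
Qed.

Lemma mulm_ctrunc x y s t : bounded m.+1 x -> bounded m.+1 y -> mulm x y = idm ->
  (1 - s * x m m) * (1 - t * y m m) = s * t ->
  mulm (ctrunc x s) (ctrunc y t) = idm.
Proof.
move=> xm ym xy st; rewrite (mulm_bounded (bounded_ctrunc x s) (bounded_ctrunc y t)).
apply: funext => i; apply: funext => j; case: ifP => // /andP [im jm].
rewrite (eq_bigr (fun k : 'I_m => x i k * y k j - t * y m j * (x i k * y k m)
   - s * x i m * (x m k * y k j) + s * t * x i m * y m j * (x m k * y k m))); last first.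
  by move=> k _; rewrite /ctrunc im jm ltn_ord /=; ring.
have [i_le j_le] := (ltnW im, ltnW jm).
rewrite big_split /= !sumrB -!mulr_sumr !sum_ord_mulm // xy.
rewrite idm_diag (@idm_offdiag _ i m) ?ltn_eqF // (@idm_offdiag _ m j) ?gtn_eqF //.
transitivity (idm i j - x i m * y m j * ((1 - s * x m m) * (1 - t * y m m) - s * t)).
  by ring.
by rewrite st subrr mulr0 subr0.
Qed.

Lemma ctrunc_intertwines x g1 g2 s : bounded m.+1 x -> bounded m g1 -> bounded m g2 ->
  mulm x g1 = mulm g2 x -> mulm (ctrunc x s) g1 = mulm g2 (ctrunc x s).
Proof.
move=> xm g1m g2m xg.
have [g1m' g2m'] := (bounded_widen (leqnSn m) g1m, bounded_widen (leqnSn m) g2m).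
rewrite (mulm_bounded (bounded_ctrunc x s) g1m) (mulm_bounded g2m (bounded_ctrunc x s)).
apply: funext => i; apply: funext => j; case: ifP => // /andP [im jm].
rewrite [LHS](eq_bigr (fun k : 'I_m => x i k * g1 k j - s * x i m * (x m k * g1 k j))); last first.
  by move=> k _; rewrite /ctrunc im ltn_ord /=; ring.
rewrite [RHS](eq_bigr (fun k : 'I_m => g2 i k * x k j - s * x m j * (g2 i k * x k m))); last first.
  by move=> k _; rewrite /ctrunc jm ltn_ord /=; ring.
have [i_le j_le] := (ltnW im, ltnW jm).
rewrite !sumrB -!mulr_sumr !sum_ord_mulm // xg.
rewrite (g1m m j) ?leqnn // (g2m i m) ?leqnn ?orbT //.
rewrite (@idm_offdiag _ i m) ?ltn_eqF // (@idm_offdiag _ m j) ?gtn_eqF //.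
rewrite (mulm_bounded_row _ _ g2m (leqnn m)) -xg (mulm_bounded_col _ _ g1m (leqnn m)).
ring.
Qed.

Lemma ctrunc_homo x r (A B : set (vec F)) : bounded m.+1 x -> subspace B ->
  A (e m) -> B (e m) -> {homo appm x : v / A v >-> B v} ->
  {homo appm (ctrunc x r) : v / A v >-> B v}.
Proof.
move=> xm [_ [_ Blin]] Aem Bem xAB v Av.
set s := \sum_(k < m) x m k * v k.
(* ctrunc x r v = x v - (v_m + r s) x e_m + (v_m - s + r s x_mm) e_m *)
have := Blin (v m - s + r * s * x m m) _ _ Bem (Blin (- (v m + r * s)) _ _ (xAB _ Aem) (xAB _ Av)).
congr B; apply: funext => i.
rewrite !appm_ebasis (appm_bounded _ (bounded_ctrunc x r)) (appm_bounded v xm) /ebasis /ctrunc.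
case: (ltngtP i m) => im.
- rewrite ltnS (ltnW im) big_ord_recr /= -/s.
  rewrite [RHS](eq_bigr (fun k : 'I_m => x i k * v k - (r * x i m) * (x m k * v k))); last first.
    by move=> k _; rewrite /= ltn_ord /=; ring.
  rewrite sumrB -mulr_sumr -/s; ring.
- rewrite ltnS leqNgt im /= (xm i m) ?im // idmE gtn_eqF // mulr0n; ring.
- subst i; rewrite ltnSn big_ord_recr /= -/s mulr1n; ring.
Qed.

Lemma GLn_inv_ctrunc x y : GLn_inv m.+1 x y ->
  exists s t, GLn_inv m (ctrunc x s) (ctrunc y t).
Proof.
case=> xm ym xy yx; have [s [t st]] := ctrunc_params (x m m) (y m m).
exists s, t; split; [exact: bounded_ctrunc | exact: bounded_ctrunc | exact: mulm_ctrunc |].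
by apply: mulm_ctrunc => //; rewrite mulrC [t * s]mulrC.
Qed.

Lemma ctrunc_image a b r q (A B : set (vec F)) :
  GLn_inv m.+1 a b -> subspace A -> subspace B -> A (e m) -> B (e m) ->
  appm a @` A = B -> mulm (ctrunc a r) (ctrunc b q) = idm ->
  appm (ctrunc a r) @` A = B.
Proof.
move=> ab SA SB Aem Bem aAB zz'; have [am bm _ _] := ab.
apply: image_eq_of_homo (ctrunc_homo r am SB Aem Bem _) (ctrunc_homo q bm SA Bem Aem _) _.
- by move=> v Av; rewrite -aAB; exists v.
- exact: GLn_inv_homo ab aAB.
- move=> v; rewrite (appm_mulm _ (bounded_ctrunc a r) (bounded_ctrunc b q)) zz'.
  exact: appm_idm.
Qed.

End CorrectedTruncation.

Section Descent.
Variables (F : finFieldType) (W1 V1 W2 V2 : set (vec F)).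
Hypotheses (SW1 : subspace W1) (SV1 : subspace V1).
Hypotheses (SW2 : subspace W2) (SV2 : subspace V2).
Local Notation e := (ebasis F).

Lemma conj_descend_step m (g1 g2 x y : mat F) :
  [/\ W1 (e m), V1 (e m), W2 (e m) & V2 (e m)] ->
  bounded m g1 -> bounded m g2 -> GLn_inv m.+1 x y ->
  act x y (W1, g1, V1) = (W2, g2, V2) ->
  exists z z', GLn_inv m z z' /\ act z z' (W1, g1, V1) = (W2, g2, V2).
Proof.
move=> [W1m V1m W2m V2m] g1m g2m xy [HW Hg HV].
have [s [t zz']] := GLn_inv_ctrunc xy; have [xm ym _ yx] := xy.
have [zm z'm zz'1 _] := zz'.
exists (ctrunc m x s), (ctrunc m y t); split; first exact: zz'.
rewrite /act; congr (_, _, _).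
- rewrite (trm_ctrunc m y t).
  apply: (ctrunc_image (q := s) (GLn_inv_trm xy) SW1 SW2 W1m W2m HW).
  by rewrite -(trm_ctrunc m y t) -(trm_ctrunc m x s) -trm_mulm zz'1 trm_idm.
- have g1m' := bounded_widen (leqnSn m) g1m.
  have xg : mulm x g1 = mulm g2 x.
    by rewrite -Hg -(mulmA (bounded_mulm xm g1m') ym xm) yx mulm1.
  by rewrite (ctrunc_intertwines s xm g1m g2m xg) -(mulmA g2m zm z'm) zz'1 mulm1.
- exact: (ctrunc_image xy SV1 SV2 V1m V2m HV zz'1).
Qed.

Lemma conj_descend n (g1 g2 : mat F) :
  (forall i, (n <= i)%N -> [/\ W1 (e i), V1 (e i), W2 (e i) & V2 (e i)]) ->
  bounded n g1 -> bounded n g2 ->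
  forall N x y, (n <= N)%N -> GLn_inv N x y ->
  act x y (W1, g1, V1) = (W2, g2, V2) ->
  exists z z', GLn_inv n z z' /\ act z z' (W1, g1, V1) = (W2, g2, V2).
Proof.
move=> E g1n g2n; elim=> [|N IH] x y; first by rewrite leqn0 => /eqP-> xy; exists x, y.
rewrite leq_eqVlt ltnS => /orP [/eqP-> xy | nN xy xT]; first by exists x, y.
have [z [z' [zz' zT]]] :=
  conj_descend_step (E N nN) (bounded_widen nN g1n) (bounded_widen nN g2n) xy xT.
exact: IH zT.
Qed.

End Descent.

Section BoundingTriples.
Variable F : finFieldType.

Lemma BT_bounded n (W : set (vec F)) g V : BT n (W, g, V) -> bounded n g.
Proof.
move=> [[_ _ _ gV gW] E] i j /orP [] kn.
  have := congr1 (fun f => f j) (gW _ (E i kn).2).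
  by rewrite /= appm_ebasis /trm /ebasis idmE => ->.
have := congr1 (fun f => f i) (gV _ (E j kn).1).
by rewrite /= appm_ebasis /ebasis idmE eq_sym => ->.
Qed.

Lemma GLinv_GLn_inv n (x y : mat F) : GLinv x y -> exists2 N, (n <= N)%N & GLn_inv N x y.
Proof.
move=> [[Nx xN] [[Ny yN] [xy yx]]]; exists (maxn n (maxn Nx Ny)); first exact: leq_maxl.
have [NxN NyN] : (Nx <= maxn n (maxn Nx Ny))%N /\ (Ny <= maxn n (maxn Nx Ny))%N.
  by rewrite !leq_max !leqnn !orbT.
by split => //; [exact: bounded_widen NxN xN | exact: bounded_widen NyN yN].
Qed.

Lemma embGL_bounded n (z : mat F) : bounded n z -> embGL (\matrix_(i < n, j < n) z i j) = z.
Proof.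
move=> zn; apply: funext => i; apply: funext => j; rewrite /embGL.
case: (insubP 'I_n i) => [i' _ <-|iN]; case: (insubP 'I_n j) => [j' _ <-|jN]; rewrite ?mxE //.
- by rewrite zn // [(n <= j)%N]leqNgt jN orbT.
- by rewrite zn // leqNgt iN.
- by rewrite zn // leqNgt iN.
Qed.

Lemma embGL_GLn_inv n (z z' : mat F) : GLn_inv n z z' ->
  exists A : 'M_n, [/\ A \in unitmx, embGL A = z & embGL (invmx A) = z'].
Proof.
move=> [zn z'n zz' _].
pose A := \matrix_(i < n, j < n) z i j; pose A' := \matrix_(i < n, j < n) z' i j.
have AA' : A *m A' = 1%:M.
  apply/matrixP => i j; rewrite !mxE; under eq_bigr => k _ do rewrite !mxE.
  have := congr1 (fun f : mat F => f i j) zz'; rewrite (mulm_bounded zn z'n) /= !ltn_ord /= => ->.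
  by rewrite idmE.
have [UA _] := mulmx1_unit AA'.
have A'E : invmx A = A' by rewrite -[invmx A]mulmx1 -AA' mulmxA mulVmx // mul1mx.
by exists A; rewrite A'E !embGL_bounded.
Qed.

End BoundingTriples.

Theorem proposition4p11 (F : finFieldType) (n : nat) (T1 T2 : triple F) :
  BT n T1 -> BT n T2 ->
  (exists x y : mat F, GLinv x y /\ act x y T1 = T2) ->
  exists A : 'M[F]_n, A \in unitmx /\
    act (embGL A) (embGL (invmx A)) T1 = T2.
Proof.
case: T1 => [[W1 g1] V1]; case: T2 => [[W2 g2] V2] BT1 BT2 [x [y [xy xT]]].
have [[[[SW1 _] [SV1 _] _ _ _] E1] [[[SW2 _] [SV2 _] _ _ _] E2]] := (BT1, BT2).
have E i : (n <= i)%N -> [/\ W1 (ebasis F i), V1 (ebasis F i), W2 (ebasis F i) & V2 (ebasis F i)].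
  by move=> ni; have [? ?] := E1 i ni; have [? ?] := E2 i ni.
have [N nN xyN] := GLinv_GLn_inv n xy.
have [z [z' [zz' zT]]] :=
  conj_descend SW1 SV1 SW2 SV2 E (BT_bounded BT1) (BT_bounded BT2) nN xyN xT.
have [A [UA zE z'E]] := embGL_GLn_inv zz'.
by exists A; rewrite zE z'E.
Qed.
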